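(* Let $\mathcal{P}$ be a partition of $\mathbb{F}_q^k$, $t$ a positive integer, and suppose $(U,\phi)$ is a block-preserving contraction of $\mathcal{P}$. Then $$r_{\mathcal{P}}(k,t)=N\big(\mathcal{D}_{\mathcal{P}}(t;\,u: u\in U)\big).$$
   Context: $d$ is Hamming distance. A block-preserving contraction of $\mathcal{P}$ is a pair $(U,\phi)$ with $U\subseteq\mathbb{F}_q^k$ and $\phi:\mathbb{F}_q^k\to U$ such that (i) $\phi(u)$ lies in the same block of $\mathcal{P}$ as $u$ for every $u$, and (ii) $d(\phi(u),\phi(v))\le d(u,v)$ whenever $u,v$ lie in different blocks of $\mathcal{P}$. A $(\mathcal{P},t)$-encoding with redundancy $r$ is a systematic map $\mathcal{C}:\mathbb{F}_q^k\to\mathbb{F}_q^{k+r}$, $\mathcal{C}(u)=(u,p(u))$, with $d(\mathcal{C}(u),\mathcal{C}(v))\ge 2t+1$ whenever $u,v$ lie in different blocks; $r_{\mathcal{P}}(k,t)$ is the minimum such $r$. For a finite set of distinct vectors (listed in some order) $u_1,\ldots,u_M$, $\mathcal{D}_{\mathcal{P}}(t;u_1,\ldots,u_M)$ is the $M\times M$ matrix with $(i,j)$ entry $\max(2t+1-d(u_i,u_j),0)$ if $u_i,u_j$ lie in different blocks and $0$ otherwise. For $D\in\mathbb{N}^{M\times M}$, $N(D)$ is the smallest $r\ge0$ such that there exist $z_1,\ldots,z_M\in\mathbb{F}_q^r$ with $d(z_i,z_j)\ge D_{i,j}$ for all $i\ne j$. *)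

From HB Require Import structures.
From mathcomp Require Import all_boot all_order all_algebra.
From Stdlib Require Import ClassicalEpsilon.
Set Implicit Arguments. Unset Strict Implicit. Unset Printing Implicit Defensive.

Definition hdist (T : eqType) (n : nat) (u v : 'rV[T]_n) : nat :=
  #|[set i : 'I_n | u ord0 i != v ord0 i]|.

(* The least natural number satisfying a predicate (chosen classically;
   it is the genuine minimum whenever the predicate is satisfiable). *)
Definition least (Q : nat -> Prop) : nat :=
  epsilon (inhabits 0%N) (fun m => Q m /\ forall r, Q r -> (m <= r)%N).

Section Defs.
Variables (F : finFieldType) (k : nat).
Implicit Types (P : {set {set 'rV[F]_k}}).

Definition diff_block P (u v : 'rV[F]_k) : bool := pblock P u != pblock P v.

Definition block_preserving_contraction P (U : {set 'rV[F]_k})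
    (phi : 'rV[F]_k -> 'rV[F]_k) : Prop :=
  (forall u, phi u \in U) /\
  (forall u, phi u \in pblock P u) /\
  (forall u v, diff_block P u v -> (hdist (phi u) (phi v) <= hdist u v)%N).

Definition has_encoding P (t r : nat) : Prop :=
  exists p : 'rV[F]_k -> 'rV[F]_r,
    forall u v, diff_block P u v ->
      (2 * t + 1 <= hdist (row_mx u (p u)) (row_mx v (p v)))%N.

Definition r_P P (t : nat) : nat := least (has_encoding P t).

(* D_P(t; u_1,...,u_M) for the elements of U listed in the order enum U *)
Definition D_P P (t : nat) (U : {set 'rV[F]_k}) : 'M[nat]_#|U| :=
  \matrix_(i, j)
    if diff_block P (enum_val i) (enum_val j)
    then (2 * t + 1 - hdist (enum_val i) (enum_val j))%N  (* = max(.,0) *)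
    else 0%N.
End Defs.

Definition N_feasible (F : finFieldType) (M : nat) (D : 'M[nat]_M) (r : nat)
    : Prop :=
  exists z : 'I_M -> 'rV[F]_r,
    forall i j, i != j -> (D i j <= hdist (z i) (z j))%N.

Definition N_of (F : finFieldType) (M : nat) (D : 'M[nat]_M) : nat :=
  least (N_feasible F D).

(* An encoding [u |-> (u, p u)] restricts to labels [p u] for the points of U,
   and these labels realise the distance requirements of [D_P t U] because the
   Hamming distance of concatenated words is the sum of the distances of the
   parts.  Conversely, labels [z] realising [D_P t U] give the encoding
   [u |-> (u, z (phi u))]: [phi] keeps points in their blocks and does not
   increase distances across blocks, so the requirement on the pair
   [(phi u, phi v)] dominates the one on [(u, v)]. *)

From mathcomp Require Import all_boot all_order all_algebra.
From Stdlib Require Import FunctionalExtensionality PropExtensionality.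

Set Implicit Arguments.
Unset Strict Implicit.
Unset Printing Implicit Defensive.

Lemma hdist_sum (T : eqType) (n : nat) (u v : 'rV[T]_n) :
  hdist u v = (\sum_(i < n) (u ord0 i != v ord0 i))%N.
Proof.
rewrite /hdist -sum1_card big_mkcond /=; apply: eq_bigr => i _.
by rewrite inE; case: (u ord0 i != v ord0 i).
Qed.

Lemma hdist_row_mx (T : eqType) (m n : nat) (a c : 'rV[T]_m) (b d : 'rV[T]_n) :
  hdist (row_mx a b) (row_mx c d) = (hdist a c + hdist b d)%N.
Proof.
rewrite !hdist_sum big_split_ord /=.
by congr (_ + _)%N; apply: eq_bigr => i _; rewrite ?row_mxEl ?row_mxEr.
Qed.

Lemma least_ext (Q1 Q2 : nat -> Prop) :
  (forall r, Q1 r <-> Q2 r) -> least Q1 = least Q2.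
Proof.
move=> Q12; congr least.
by apply: functional_extensionality => r; apply: propositional_extensionality.
Qed.

Section EncodingsAndDistanceMatrices.

Variables (F : finFieldType) (k : nat) (P : {set {set 'rV[F]_k}}) (t : nat).
Variable U : {set 'rV[F]_k}.

Lemma D_P_leE (i j : 'I_#|U|) (d : nat) :
  (D_P P t U i j <= d)%N =
  diff_block P (enum_val i) (enum_val j) ==>
    (2 * t + 1 <= hdist (enum_val i) (enum_val j) + d)%N.
Proof. by rewrite /D_P mxE; case: ifP => //= _; rewrite leq_subLR. Qed.

Lemma N_feasible_of_encoding (r : nat) :
  has_encoding P t r -> N_feasible F (D_P P t U) r.
Proof.
case=> p encp; exists (fun i => p (enum_val i)) => i j _.
by rewrite D_P_leE; apply/implyP => /encp; rewrite hdist_row_mx.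
Qed.

Hypothesis partP : partition P [set: 'rV[F]_k].

Lemma pblock_in_block (u w : 'rV[F]_k) :
  w \in pblock P u -> pblock P w = pblock P u.
Proof.
have trivP : trivIset P by case/and3P: partP.
apply: def_pblock => //; apply: pblock_mem.
by rewrite (cover_partition partP) inE.
Qed.

Variable phi : 'rV[F]_k -> 'rV[F]_k.
Hypothesis contr_phi : block_preserving_contraction P U phi.

Lemma diff_block_contraction (u v : 'rV[F]_k) :
  diff_block P u v -> diff_block P (phi u) (phi v).
Proof.
case: contr_phi => _ [phi_block _].
by rewrite /diff_block (pblock_in_block (phi_block u)) (pblock_in_block (phi_block v)).
Qed.

Lemma encoding_of_N_feasible (r : nat) :
  N_feasible F (D_P P t U) r -> has_encoding P t r.
Proof.
case: contr_phi => phiU [_ phi_contr] [z zD].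
pose idx u := enum_rank_in (phiU 0%R) (phi u).
have idxK u : enum_val (idx u) = phi u by rewrite enum_rankK_in.
exists (fun u => z (idx u)) => u v uv.
have phi_uv := diff_block_contraction uv.
have idx_uv : idx u != idx v.
  by apply: contraTneq phi_uv => eq_idx; rewrite /diff_block -!idxK eq_idx eqxx.
have := zD _ _ idx_uv; rewrite D_P_leE !idxK phi_uv /= hdist_row_mx.
by move/leq_trans; apply; rewrite leq_add2r phi_contr.
Qed.

End EncodingsAndDistanceMatrices.

Theorem theorem8 (F : finFieldType) (k : nat) (P : {set {set 'rV[F]_k}})
    (t : nat) (U : {set 'rV[F]_k}) (phi : 'rV[F]_k -> 'rV[F]_k) :
  partition P [set: 'rV[F]_k] ->
  (0 < t)%N ->
  block_preserving_contraction P U phi ->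
  r_P P t = N_of F (D_P P t U).
Proof.
move=> partP _ contr_phi; apply: least_ext => r; split.
- exact: N_feasible_of_encoding.
- exact: (encoding_of_N_feasible partP contr_phi).
Qed.
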